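(* Let $f(x_1,\ldots,x_n)=\gamma x_1^{\alpha_1}\cdots x_n^{\alpha_n}$ be an $n$-input Cobb–Douglas production function, where $\gamma>0$ and $\alpha_1,\ldots,\alpha_n$ are nonzero constants. Then the production hypersurface $\Phi(f)=\{(x,f(x))\}$ is isotropic minimal in $\mathbf{I}^{n+1}$ if and only if $f=\gamma x_1\cdots x_n$ for some nonzero constant $\gamma$ (i.e. $\alpha_1=\cdots=\alpha_n=1$).
   Context: The isotropic space $\mathbf{I}^{n+1}$ is $\mathbb{R}^{n+1}$ with the degenerate isotropic metric, the $x_{n+1}$-direction being isotropic; the graph $\Phi(f)=\{(x,f(x)):x\in D\}$ of a function $f$ on a domain $D\subset\mathbb{R}^n$ is regarded as a hypersurface in $\mathbf{I}^{n+1}$. Its isotropic mean curvature is $K_1=\frac1n\operatorname{trace}(D^2f)=\frac1n\Delta f$ with $\Delta=\sum_j\partial^2/\partial x_j^2$; $\Phi(f)$ is isotropic minimal if $K_1\equiv0$, i.e. $\Delta f=0$. *)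

From HB Require Import structures.
From mathcomp Require Import all_boot all_order all_algebra.
From mathcomp Require Import all_classical all_reals all_analysis.
Set Implicit Arguments. Unset Strict Implicit. Unset Printing Implicit Defensive.
Import Order.TTheory GRing.Theory Num.Theory.
Import numFieldNormedType.Exports.
Local Open Scope ring_scope.

Definition basis_vec (R : realType) (n : nat) (j : 'I_n) : 'rV[R]_n :=
  delta_mx 0 j.

Definition laplacian (R : realType) (n : nat) (f : 'rV[R]_n -> R)
    (x : 'rV[R]_n) : R :=
  \sum_(j < n) 'D_(basis_vec R j) ('D_(basis_vec R j) f) x.

(* Isotropic mean curvature K_1 = (1/n) trace(D^2 f) = (1/n) Delta f. *)
Definition isotropic_mean_curvature (R : realType) (n : nat)
    (f : 'rV[R]_n -> R) (x : 'rV[R]_n) : R :=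
  (n%:R)^-1 * laplacian f x.

Definition isotropic_minimal (R : realType) (n : nat)
    (D : set 'rV[R]_n) (f : 'rV[R]_n -> R) : Prop :=
  forall x, D x -> isotropic_mean_curvature f x = 0.

Definition pos_orthant (R : realType) (n : nat) : set 'rV[R]_n :=
  [set x | forall i : 'I_n, 0 < x ord0 i].

Definition cobb_douglas (R : realType) (n : nat) (gamma : R)
    (alpha : 'I_n -> R) (x : 'rV[R]_n) : R :=
  gamma * \prod_(i < n) (x ord0 i) `^ (alpha i).

(* On the positive orthant the Laplacian of f = gamma x_1^a_1 ... x_n^a_n
   factors as f(x) * sum_j a_j (a_j - 1) / x_j^2, and f > 0 there.  So the
   graph is isotropic minimal iff this rational function of x vanishes on the
   orthant; moving a single coordinate x_j shows that each coefficient
   a_j (a_j - 1) vanishes, i.e. a_j = 1 since a_j <> 0. *)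
From HB Require Import structures.
From mathcomp Require Import all_boot all_order all_algebra.
From mathcomp Require Import all_classical all_reals all_analysis.
From mathcomp Require Import lra.
Import Order.TTheory GRing.Theory Num.Theory.
Import numFieldNormedType.Exports.
Local Open Scope ring_scope.

Section DirectionalDerivatives.
Variable R : realType.

Lemma derive_alongE {V W : normedModType R} (f : V -> W) (v y : V) :
  'D_v f y = 'D_1 (fun s : R => f (s *: v + y)) 0.
Proof.
rewrite /derive.
suff -> : (fun h : R => h^-1 *: ((f \o shift y) (h *: v) - f y)) =
  (fun h : R => h^-1 *:
    (((fun s : R => f (s *: v + y)) \o shift 0) (h *: (1 : R)) - f (0 *: v + y))).
  by [].
by apply/funext => h /=; rewrite scale0r add0r addr0 -[h%:A]/(h * 1) mulr1.
Qed.

Lemma derive1_translateE (g : R -> R) (c : R) :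
  'D_1 g c = 'D_1 (fun s : R => g (s + c)) 0.
Proof.
rewrite (@derive_alongE R R g 1 c); congr (derive _ _ _); apply/funext => s.
by rewrite [s *: 1]mulr1.
Qed.

Lemma derive1_scale_powR_translate (K a c : R) : 0 < c ->
  'D_1 (fun s : R => K * (s + c) `^ a) 0 = K * (a * c `^ (a - 1)).
Proof.
move=> c_gt0; rewrite -(derive1_translateE (fun t => K * t `^ a)).
have powR_derive : is_derive c 1 (fun t => K * t `^ a) (K * (a * c `^ (a - 1))).
  by have := is_deriveZ K (is_derive1_powR a c_gt0).
exact: derive_val.
Qed.

End DirectionalDerivatives.

Section CobbDouglasLaplacian.
Variables (R : realType) (n : nat) (gamma : R) (alpha : 'I_n -> R).

Let f := cobb_douglas gamma alpha.

Definition cobb_douglas_cofactor (j : 'I_n) (y : 'rV[R]_n) : R :=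
  gamma * \prod_(i < n | i != j) y ord0 i `^ alpha i.

Lemma line_basis_vecE (j i : 'I_n) (s : R) (y : 'rV[R]_n) :
  (s *: basis_vec R j + y) ord0 i = (if i == j then s + y ord0 i else y ord0 i).
Proof.
rewrite /basis_vec !mxE eqxx /=.
by case: eqP => _; rewrite ?mulr1 ?mulr0 ?add0r.
Qed.

Lemma cofactor_line (j : 'I_n) (s : R) (y : 'rV[R]_n) :
  cobb_douglas_cofactor j (s *: basis_vec R j + y) = cobb_douglas_cofactor j y.
Proof.
congr (_ * _); apply: eq_bigr => i /negbTE neq_ij.
by rewrite line_basis_vecE neq_ij.
Qed.

Lemma cobb_douglas_line (j : 'I_n) (s : R) (y : 'rV[R]_n) :
  f (s *: basis_vec R j + y) =
  cobb_douglas_cofactor j y * (s + y ord0 j) `^ alpha j.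
Proof.
rewrite /f /cobb_douglas (bigD1 j) //= line_basis_vecE eqxx.
rewrite [RHS]mulrAC -mulrA; congr (_ * (_ * _)).
by apply: eq_bigr => i /negbTE neq_ij; rewrite line_basis_vecE neq_ij.
Qed.

Lemma cobb_douglas_cofactorE (j : 'I_n) (x : 'rV[R]_n) :
  f x = cobb_douglas_cofactor j x * x ord0 j `^ alpha j.
Proof. by have := cobb_douglas_line j 0 x; rewrite scale0r !add0r. Qed.

Lemma partial_cobb_douglas (j : 'I_n) (y : 'rV[R]_n) : 0 < y ord0 j ->
  'D_(basis_vec R j) f y =
  cobb_douglas_cofactor j y * (alpha j * y ord0 j `^ (alpha j - 1)).
Proof.
move=> yj_gt0; rewrite derive_alongE.
under eq_fun do rewrite cobb_douglas_line.
exact: derive1_scale_powR_translate.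
Qed.

Lemma partial2_cobb_douglas (j : 'I_n) (x : 'rV[R]_n) : 0 < x ord0 j ->
  'D_(basis_vec R j) ('D_(basis_vec R j) f) x =
  cobb_douglas_cofactor j x *
    (alpha j * ((alpha j - 1) * x ord0 j `^ (alpha j - 1 - 1))).
Proof.
move=> xj_gt0; rewrite derive_alongE.
(* the first-order formula only holds where [s + x_j > 0], i.e. near [s = 0] *)
rewrite (@near_eq_derive _ _ _ _
  (fun s => cobb_douglas_cofactor j x * alpha j * (s + x ord0 j) `^ (alpha j - 1)));
  last first.
  near=> s.
  have s_small : `|s| < x ord0 j.
    by near: s; exists (x ord0 j) => // z /=; rewrite sub0r normrN.
  rewrite partial_cobb_douglas; last first.
    by rewrite line_basis_vecE eqxx; move: s_small; rewrite ltr_norml; lra.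
  by rewrite cofactor_line line_basis_vecE eqxx mulrA.
by rewrite derive1_scale_powR_translate // -!mulrA.
Unshelve. all: by end_near.
Qed.

Lemma laplacian_cobb_douglas (x : 'rV[R]_n) : pos_orthant x ->
  laplacian f x = f x * \sum_(j < n) alpha j * (alpha j - 1) / x ord0 j ^+ 2.
Proof.
move=> x_pos; rewrite /laplacian mulr_sumr; apply: eq_bigr => j _.
rewrite partial2_cobb_douglas ?x_pos // (cobb_douglas_cofactorE j).
have -> : alpha j - 1 - 1 = alpha j - 2%:R by rewrite -addrA -opprD.
rewrite powRB; last by apply/implyP => _; rewrite gt_eqF ?x_pos.
rewrite powR_mulrn; last exact/ltW/x_pos.
rewrite !mulrA; congr (_ * _); rewrite -!mulrA; congr (_ * _).
by congr (_ * _); rewrite mulrA mulrC.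
Qed.

Lemma cobb_douglas_gt0 (x : 'rV[R]_n) : 0 < gamma -> pos_orthant x -> 0 < f x.
Proof.
move=> gamma_gt0 x_pos; rewrite mulr_gt0 //.
by apply: prodr_gt0 => i _; apply: powR_gt0.
Qed.

Lemma isotropic_minimal_cobb_douglasE : 0 < gamma ->
  isotropic_minimal (@pos_orthant R n) f <->
  (forall x, pos_orthant x ->
     \sum_(j < n) alpha j * (alpha j - 1) / x ord0 j ^+ 2 = 0).
Proof.
move=> gamma_gt0; have [n_eq0|n_gt0] := posnP n.
  (* for [n = 0] the factor [n%:R^-1] is the junk value [0^-1 = 0] *)
  have n_natr0 : (n%:R : R) = 0 by rewrite n_eq0.
  split=> _ x _; last by rewrite /isotropic_mean_curvature n_natr0 invr0 mul0r.
  by rewrite big1 // => j; have := ltn_ord j; rewrite {2}n_eq0.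
have n_neq0 : (n%:R : R) != 0 by rewrite pnatr_eq0 -lt0n.
have curvature_eq0E x : pos_orthant x ->
  (isotropic_mean_curvature f x == 0) =
  (\sum_(j < n) alpha j * (alpha j - 1) / x ord0 j ^+ 2 == 0).
  move=> x_pos; rewrite /isotropic_mean_curvature laplacian_cobb_douglas //.
  rewrite mulf_eq0 invr_eq0 (negbTE n_neq0) /= mulf_eq0.
  by rewrite (gt_eqF (cobb_douglas_gt0 x gamma_gt0 x_pos)).
split=> eq0 x x_pos; apply/eqP.
- by rewrite -curvature_eq0E //; apply/eqP/eq0.
- by rewrite curvature_eq0E //; apply/eqP/eq0.
Qed.

End CobbDouglasLaplacian.

Lemma orthant_sum_div_sqr_eq0 (R : realType) (n : nat) (c : 'I_n -> R) :
  (forall x, pos_orthant x -> \sum_(j < n) c j / x ord0 j ^+ 2 = 0) <->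
  (forall j, c j = 0).
Proof.
split=> [sum_eq0 i|c_eq0 x _]; last by rewrite big1 // => j _; rewrite c_eq0 mul0r.
pose x (t : R) : 'rV[R]_n := \row_k (if k == i then t else 1).
have sum_at t : 0 < t -> c i / t ^+ 2 + \sum_(k < n | k != i) c k = 0.
  move=> t_gt0; rewrite -[RHS](sum_eq0 (x t)); last by move=> k; rewrite mxE; case: ifP.
  rewrite [RHS](bigD1 i) //= /x mxE eqxx; congr (_ + _).
  by apply: eq_bigr => k /negbTE neq_ki; rewrite mxE neq_ki expr1n divr1.
move: (sum_at 1 ltr01) (sum_at 2 (ltr0Sn _ 1)); rewrite expr1n divr1 expr2.
by move: (c i) (\sum_(k < n | k != i) c k) => a d; lra.
Qed.

Theorem proposition4p2 (R : realType) (n : nat) (gamma : R)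
    (alpha : 'I_n -> R) :
  0 < gamma -> (forall i, alpha i != 0) ->
  (isotropic_minimal (@pos_orthant R n) (cobb_douglas gamma alpha)
   <-> (forall i, alpha i = 1)).
Proof.
move=> gamma_gt0 alpha_neq0.
rewrite isotropic_minimal_cobb_douglasE // orthant_sum_div_sqr_eq0.
split=> coef_eq i; last by rewrite coef_eq subrr mulr0.
move/eqP: (coef_eq i); rewrite mulf_eq0 (negbTE (alpha_neq0 i)) subr_eq0.
by move/eqP.
Qed.
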